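(* Assume $\epsilon\in(0,1/3)$, $p\ge2$, $\nu>0$, $T\ge 4\max\{\log\frac1{1-\epsilon},\log p\}$, and the inlier stability condition. Let $\delta_T=4\nu\big(\sqrt{\log(1/(1-\epsilon))/T}+\sqrt{\log p/T}\big)$. Let $\hat\mu^{[1]}\in\operatorname{conv}\{g_1,\dots,g_N\}$ and, for $s\ge1$, let $\bar w^{[s]}\in\Delta_{N,\epsilon}$ satisfy $\gamma(\bar w^{[s]};\hat\mu^{[s]})\le\mathrm{OPT}(\hat\mu^{[s]})+\delta_T$ (this holds when $\bar w^{[s]}$ is the output of the MW–MMW rounds with center $\hat\mu^{[s]}$, uniform initialization, $\eta_w=\frac1\nu\sqrt{\log(1/(1-\epsilon))/T}$, $\eta_\rho=\frac1\nu\sqrt{\log p/T}$), and set $\hat\mu^{[s+1]}=\sum_{n=1}^N\bar w^{[s]}_ng_n$. Let $e^{[s]}=\|\hat\mu^{[s]}-\mu_g\|_2$ and $\alpha_\epsilon=\sqrt{\epsilon/(1-2\epsilon)}$. Then for all $s\ge1$, $$e^{[s+1]}\le\alpha_\epsilon e^{[s]}+R_{\epsilon,T},\qquad R_{\epsilon,T}=(1+\alpha_\epsilon)\delta_\mu+\alpha_\epsilon\sqrt{\|\Sigma_g\|_{op}+\delta_\Sigma+\delta_T}.$$ Consequently $e^{[s]}\le\alpha_\epsilon^{s-1}e^{[1]}+\frac{1-\alpha_\epsilon^{s-1}}{1-\alpha_\epsilon}R_{\epsilon,T}$ for all $s\ge1$, and $\limsup_{s\to\infty}e^{[s]}\le 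R_\infty:=\frac{R_{\epsilon,T}}{1-\alpha_\epsilon}$.
   Context: Fix $N\ge1$, $p\ge1$, $\epsilon\in[0,1)$ and vectors $g_1,\dots,g_N\in\mathbb R^p$; $\nu=\max_{i,j}\|g_i-g_j\|_2^2$. For an index set $I$ and $\epsilon'\in[0,1)$, $\Delta_{I,\epsilon'}=\{w\in\mathbb R^{I}:\sum_{n\in I}w_n=1,\ 0\le w_n\le\frac1{(1-\epsilon')|I|}\}$, and $\Delta_{N,\epsilon}=\Delta_{[N],\epsilon}$. Density matrices $\mathfrak D_p=\{\rho\succeq0\text{ symmetric},\mathrm{Tr}\,\rho=1\}$, $\langle A,B\rangle=\mathrm{Tr}(A^\top B)$. For $\hat\mu\in\mathbb R^p$: $S(w;\hat\mu)=\sum_n w_n(g_n-\hat\mu)(g_n-\hat\mu)^\top$, $\gamma(w;\hat\mu)=\|S(w;\hat\mu)\|_{op}$, $\mathrm{OPT}(\hat\mu)=\min_{w\in\Delta_{N,\epsilon}}\max_{\rho\in\mathfrak D_p}\langle S(w;\hat\mu),\rho\rangle$. MW–MMW rounds for center $\hat\mu$: $z_n=g_n-\hat\mu$, $w^{(1)}=(1/N,\dots,1/N)$; for $t=1,\dots,T$: $S^{(t)}=\sum_nw^{(t)}_nz_nz_n^\top$, $\rho^{(t)}=\exp(\eta_\rho\sum_{t'\le t}S^{(t')})/\mathrm{Tr}\exp(\eta_\rho\sum_{t'\le t}S^{(t')})$, $m^{(t)}_n=z_n^\top\rho^{(t)}z_n$, $\tilde w^{(t)}_n=w^{(t)}_n(1-\eta_wm^{(t)}_n)$,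 $w^{(t+1)}=\arg\min_{w\in\Delta_{N,\epsilon}}\sum_nw_n\log(w_n/\tilde w^{(t)}_n)$; output $\bar w=\frac1T\sum_tw^{(t)}$. Inlier stability condition: there is a partition $[N]=I_{in}\sqcup I_{out}$ with $|I_{out}|\le\epsilon N$, a vector $\mu_g\in\mathbb R^p$, a symmetric PSD $\Sigma_g$ and constants $\delta_\mu,\delta_\Sigma\ge0$ such that for every $w\in\Delta_{I_{in},\epsilon/(1-\epsilon)}$: $\|\sum_{n\in I_{in}}w_n(g_n-\mu_g)\|_2\le\delta_\mu$ and $\sum_{n\in I_{in}}w_n(g_n-\mu_g)(g_n-\mu_g)^\top\preceq\Sigma_g+\delta_\Sigma I_p$. *)

From HB Require Import structures.
From mathcomp Require Import all_boot all_order all_algebra.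
From mathcomp Require Import all_classical all_reals all_analysis.
Set Implicit Arguments. Unset Strict Implicit. Unset Printing Implicit Defensive.
Import Order.TTheory GRing.Theory Num.Theory.
Local Open Scope classical_set_scope.
Local Open Scope ring_scope.

Section Defs.
Variable R : realType.

Definition norm2 (p : nat) (x : 'cV[R]_p) : R := Num.sqrt (\sum_i (x i 0) ^+ 2).

Definition qform (p : nat) (M : 'M[R]_p) (x : 'cV[R]_p) : R := (x^T *m M *m x) 0 0.

Definition psd (p : nat) (M : 'M[R]_p) : Prop := forall x : 'cV[R]_p, 0 <= qform M x.

Definition loewner_le (p : nat) (A B : 'M[R]_p) : Prop := psd (B - A).

Definition opnorm (p : nat) (A : 'M[R]_p) : R :=
  sup [set norm2 (A *m x) | x in [set x : 'cV[R]_p | norm2 x <= 1]].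

Definition frob (p : nat) (A B : 'M[R]_p) : R := \tr (A^T *m B).

Definition density (p : nat) (rho : 'M[R]_p) : Prop :=
  rho^T = rho /\ psd rho /\ \tr rho = 1.

(* capped simplex Delta_{I,eps'} on an index set I of [N]; weights are
   functions on 'I_N of which only the values on I matter *)
Definition capped_simplex (N : nat) (I : {set 'I_N}) (eps' : R) (w : 'I_N -> R) : Prop :=
  \sum_(n in I) w n = 1 /\
  (forall n, n \in I -> 0 <= w n /\ w n <= 1 / ((1 - eps') * #|I|%:R)).

Definition DeltaN (N : nat) (eps : R) (w : 'I_N -> R) : Prop :=
  capped_simplex [set: 'I_N] eps w.

Definition Smat (N p : nat) (g : 'I_N -> 'cV[R]_p) (w : 'I_N -> R) (mu : 'cV[R]_p)
  : 'M[R]_p := \sum_n w n *: ((g n - mu) *m (g n - mu)^T).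

Definition gammaS (N p : nat) (g : 'I_N -> 'cV[R]_p) (w : 'I_N -> R) (mu : 'cV[R]_p) : R :=
  opnorm (Smat g w mu).

(* OPT(mu) = min_{w in Delta_{N,eps}} max_{rho in D_p} <S(w;mu), rho>
   (min/max written as inf/sup; they are attained by compactness) *)
Definition OPT (N p : nat) (eps : R) (g : 'I_N -> 'cV[R]_p) (mu : 'cV[R]_p) : R :=
  inf [set sup [set frob (Smat g w mu) rho | rho in [set rho | density rho]]
      | w in [set w | DeltaN eps w]].

Definition nuG (N p : nat) (g : 'I_N -> 'cV[R]_p) : R :=
  \big[Num.max/0]_(i < N) \big[Num.max/0]_(j < N) (norm2 (g i - g j)) ^+ 2.

Definition in_conv (N p : nat) (g : 'I_N -> 'cV[R]_p) (mu : 'cV[R]_p) : Prop :=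
  exists lam : 'I_N -> R, (forall n, 0 <= lam n) /\ \sum_n lam n = 1 /\
                          mu = \sum_n lam n *: g n.

Definition inlier_stable (N p : nat) (eps : R) (g : 'I_N -> 'cV[R]_p)
  (Iin : {set 'I_N}) (mug : 'cV[R]_p) (Sigmag : 'M[R]_p) (dmu dSigma : R) : Prop :=
  (#|~: Iin|%:R <= eps * N%:R) /\
  Sigmag^T = Sigmag /\ psd Sigmag /\ 0 <= dmu /\ 0 <= dSigma /\
  forall w : 'I_N -> R, capped_simplex Iin (eps / (1 - eps)) w ->
    norm2 (\sum_(n in Iin) w n *: (g n - mug)) <= dmu /\
    loewner_le (\sum_(n in Iin) w n *: ((g n - mug) *m (g n - mug)^T))
               (Sigmag + dSigma%:M).

Definition deltaT (eps nu : R) (p T : nat) : R :=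
  4 * nu * (Num.sqrt (ln (1 / (1 - eps)) / T%:R) + Num.sqrt (ln p%:R / T%:R)).

Definition alpha_eps (eps : R) : R := Num.sqrt (eps / (1 - 2 * eps)).

End Defs.

From HB Require Import structures.
From mathcomp Require Import all_boot all_order all_algebra.
From mathcomp Require Import all_classical all_reals all_analysis.
From mathcomp Require Import ring lra.
Import Order.TTheory GRing.Theory Num.Theory.
Local Open Scope classical_set_scope.
Local Open Scope ring_scope.
Set Implicit Arguments. Unset Strict Implicit. Unset Printing Implicit Defensive.

(* Fix a round with centre [mu] and write [e = |mu - mu_g|].  Testing OPT(mu) against the
   uniform weights on the inliers, stability gives OPT(mu) <= |Sigma_g| + d_Sigma
   + 2 d_mu e + e^2 (the inequality <P, rho> >= 0 for PSD [P], [rho] behind this is proved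
   by Gaussian elimination of [rho] with Schur complements), so that
   sqrt(gamma) <= sqrt(|Sigma_g| + d_Sigma + d_T) + e + d_mu.
   The new centre is the weighted mean of a [w] in Delta_{N,eps}, and such means are
   resilient: along the unit direction [v] of the deviation [d] from [mu_g], the inliers
   (whose renormalised weights lie in Delta_{I,eps/(1-eps)}) have mean at most [d_mu],
   while the variance along [v] is at most [gamma].  Splitting the centred sum between
   inliers and outliers and applying Cauchy-Schwarz to both halves yields
   W_in (|d| - d_mu)^2 <= W_out gamma, and W_out <= alpha^2 W_in.  Hence
   e' <= d_mu + alpha sqrt(gamma) <= alpha e + R, and the affine recursion unrolls. *)

Section WeightedSums.
Variables (R : realFieldType) (T : finType).
Implicit Types (P : pred T) (I : {set T}) (w a b t x : T -> R).

Lemma weighted_cauchy_schwarz P w a b : (forall i, P i -> 0 <= w i) ->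
  (\sum_(i | P i) w i * (a i * b i)) ^+ 2 <=
  (\sum_(i | P i) w i * a i ^+ 2) * (\sum_(i | P i) w i * b i ^+ 2).
Proof.
move=> w_ge0.
set A := \sum_(i | P i) _ * a i ^+ 2; set B := \sum_(i | P i) _ * b i ^+ 2.
set X := \sum_(i | P i) _.
have wsqr_ge0 c i : P i -> 0 <= w i * c ^+ 2 by move=> Pi; rewrite mulr_ge0 ?sqr_ge0 ?w_ge0.
have B_ge0 : 0 <= B by apply: sumr_ge0 => i; apply: wsqr_ge0.
have [B0 | B_neq0] := eqVneq B 0.
  have wb0 := psumr_eq0P (fun i => wsqr_ge0 (b i) i) B0.
  suff -> : X = 0 by rewrite B0 expr0n mulr0.
  apply: big1 => i Pi; have /eqP := wb0 i Pi.
  by rewrite mulf_eq0 sqrf_eq0 => /orP[] /eqP ->; rewrite ?mul0r ?mulr0.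
have expand c d : \sum_(i | P i) w i * (c * a i - d * b i) ^+ 2 =
    c ^+ 2 * A - 2 * c * d * X + d ^+ 2 * B.
  rewrite /A /X /B !mulr_sumr -!sumrB -big_split /=; apply: eq_bigr => i _; ring.
(* the discriminant argument, evaluated at the minimiser [X / B] scaled by [B] *)
have : 0 <= \sum_(i | P i) w i * (B * a i - X * b i) ^+ 2.
  by apply: sumr_ge0 => i; apply: wsqr_ge0.
rewrite expand -[leRHS](_ : B * (A * B - X ^+ 2) = _); last by ring.
by rewrite pmulr_rge0 ?lt0r ?B_neq0 // subr_ge0.
Qed.

Lemma cauchy_schwarz P a b :
  (\sum_(i | P i) a i * b i) ^+ 2 <= (\sum_(i | P i) a i ^+ 2) * (\sum_(i | P i) b i ^+ 2).
Proof.
have drop1 (F : T -> R) : \sum_(i | P i) 1 * F i = \sum_(i | P i) F i.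
  by apply: eq_bigr => i _; rewrite mul1r.
by have := @weighted_cauchy_schwarz P (fun=> 1) a b (fun _ _ => ler01); rewrite !drop1.
Qed.

Lemma sqr_wsum_le P w a : (forall i, P i -> 0 <= w i) ->
  (\sum_(i | P i) w i * a i) ^+ 2 <= (\sum_(i | P i) w i) * (\sum_(i | P i) w i * a i ^+ 2).
Proof.
move=> /(@weighted_cauchy_schwarz P w a (fun=> 1)).
by under eq_bigr do rewrite mulr1; under [X in _ * X]eq_bigr do rewrite expr1n mulr1; rewrite mulrC.
Qed.

Lemma sum_setC_split I (F : T -> R) :
  \sum_i F i = \sum_(i in I) F i + \sum_(i in ~: I) F i.
Proof. by rewrite (bigID (mem I)) /=; congr (_ + _); apply: eq_bigl => i; rewrite !inE. Qed.

Lemma wsum_sqrD P w a (c : R) :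
  \sum_(i | P i) w i * (a i + c) ^+ 2 =
  \sum_(i | P i) w i * a i ^+ 2 + 2 * c * \sum_(i | P i) w i * a i + c ^+ 2 * \sum_(i | P i) w i.
Proof. by rewrite !mulr_sumr -!big_split /=; apply: eq_bigr => i _; ring. Qed.

Lemma wvariance_le w t (m : R) : \sum_i w i = 1 ->
  \sum_i w i * (t i - \sum_j w j * t j) ^+ 2 <= \sum_i w i * (t i - m) ^+ 2.
Proof.
move=> w1; rewrite !wsum_sqrD w1 !mulr1.
by set D := \sum_j w j * t j; have := sqr_ge0 (m - D); nra.
Qed.

Lemma sqr_wsum_setC_le I w x : (forall i, 0 <= w i) -> \sum_i w i = 1 ->
  \sum_i w i * x i = 0 ->
  (\sum_(i in I) w i * x i) ^+ 2 <=
  (\sum_(i in I) w i) * (\sum_(i in ~: I) w i) * \sum_i w i * x i ^+ 2.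
Proof.
move=> w_ge0 w1 wx0; rewrite (sum_setC_split I (fun i => w i * x i ^+ 2)).
set K := \sum_(i in I) _ * x i; set Win := \sum_(i in I) w i.
set Wout := \sum_(i in ~: I) w i.
have W1 : Win + Wout = 1 by rewrite -w1 (sum_setC_split I).
have Win_ge0 : 0 <= Win by apply: sumr_ge0.
have Wout_ge0 : 0 <= Wout by apply: sumr_ge0.
have Kin := sqr_wsum_le x (fun i (_ : i \in I) => w_ge0 i).
have := sqr_wsum_le x (fun i (_ : i \in ~: I) => w_ge0 i).
have -> : \sum_(i in ~: I) w i * x i = - K.
  by apply/eqP; rewrite -addr_eq0 addrC -sum_setC_split wx0.
rewrite sqrrN -/Win -/Wout -/K in Kin * => Kout.
have -> : K ^+ 2 = Wout * K ^+ 2 + Win * K ^+ 2 by rewrite -mulrDl addrC W1 mul1r.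
rewrite mulrDr -!mulrA [Win * (Wout * _)]mulrCA.
by apply: lerD; apply: ler_wpM2l.
Qed.

Lemma wmean_shift_sqr_le I w t D m : (forall i, 0 <= w i) -> \sum_i w i = 1 ->
  \sum_i w i * t i = D ->
  \sum_(i in I) w i * t i <= (\sum_(i in I) w i) * m -> m <= D ->
  (\sum_(i in I) w i) * (D - m) ^+ 2 <=
  (\sum_(i in ~: I) w i) * \sum_i w i * (t i - D) ^+ 2.
Proof.
move=> w_ge0 w1 wtD inlier_le m_le_D.
set Win := \sum_(i in I) w i in inlier_le *; set Wout := \sum_(i in ~: I) w i.
set V := \sum_i _ * _ ^+ 2.
have Win_ge0 : 0 <= Win by apply: sumr_ge0.
have V_ge0 : 0 <= V by apply: sumr_ge0 => i _; rewrite mulr_ge0 ?sqr_ge0.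
have centred : \sum_i w i * (t i - D) = 0.
  have -> : \sum_i w i * (t i - D) = \sum_i w i * t i - D * \sum_i w i.
    by rewrite mulr_sumr -sumrB; apply: eq_bigr => i _; ring.
  by rewrite w1 wtD mulr1 subrr.
have := sqr_wsum_setC_le I w_ge0 w1 centred; rewrite -/Win -/Wout -/V.
have -> : \sum_(i in I) w i * (t i - D) = \sum_(i in I) w i * t i - Win * D.
  by rewrite /Win mulr_suml -sumrB; apply: eq_bigr => i _; ring.
move=> K2_le.
have [->|Win_gt0] := eqVneq Win 0; first by rewrite mul0r mulr_ge0 // sumr_ge0.
rewrite -(ler_pM2l (_ : 0 < Win)); last by rewrite lt0r Win_gt0.
rewrite mulrA -expr2 -exprMn mulrA; apply: le_trans K2_le.
have K_le : Win * (D - m) <= Win * D - \sum_(i in I) w i * t i by rewrite mulrBr; lra.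
have Dm_ge0 : 0 <= Win * (D - m) by rewrite mulr_ge0 // subr_ge0.
by rewrite -[leRHS]sqrrN opprB ler_pXn2r // nnegrE (le_trans Dm_ge0).
Qed.

End WeightedSums.

Section EuclideanSpace.
Variables (R : realType) (p : nat).
Implicit Types (A B M : 'M[R]_p) (x y u : 'cV[R]_p).

Definition dot x y : R := (x^T *m y) 0 0.

Lemma dotE x y : dot x y = \sum_i x i 0 * y i 0.
Proof. by rewrite /dot mxE; apply: eq_bigr => i _; rewrite mxE. Qed.

Lemma dotC x y : dot x y = dot y x.
Proof. by rewrite !dotE; apply: eq_bigr => i _; rewrite mulrC. Qed.

Lemma dotBr x y u : dot x (y - u) = dot x y - dot x u.
Proof. by rewrite /dot mulmxBr !mxE. Qed.

Lemma dotDr x y u : dot x (y + u) = dot x y + dot x u.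
Proof. by rewrite /dot mulmxDr !mxE. Qed.

Lemma dotDl x y u : dot (x + y) u = dot x u + dot y u.
Proof. by rewrite dotC dotDr !(dotC u). Qed.

Lemma dot_sumr (I : finType) (P : pred I) x (c : I -> R) (y : I -> 'cV[R]_p) :
  dot x (\sum_(n | P n) c n *: y n) = \sum_(n | P n) c n * dot x (y n).
Proof.
by rewrite /dot mulmx_sumr summxE; apply: eq_bigr => n _; rewrite -scalemxAr mxE.
Qed.

Lemma dotZr x (a : R) y : dot x (a *: y) = a * dot x y.
Proof. by rewrite /dot -scalemxAr mxE. Qed.

Lemma dotZl (a : R) x y : dot (a *: x) y = a * dot x y.
Proof. by rewrite dotC dotZr dotC. Qed.

Lemma dot_mulmxl A x y : dot (A *m x) y = dot x (A^T *m y).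
Proof. by rewrite /dot trmx_mul mulmxA. Qed.

Lemma dot_delta x k : dot x (delta_mx k 0) = x k 0.
Proof. by rewrite dotC /dot trmx_delta -rowE mxE. Qed.

Lemma norm2_ge0 x : 0 <= norm2 x.
Proof. exact: sqrtr_ge0. Qed.

Lemma dotxx x : dot x x = norm2 x ^+ 2.
Proof.
rewrite dotE /norm2 sqr_sqrtr; last by apply: sumr_ge0 => i _; exact: sqr_ge0.
by apply: eq_bigr => i _; rewrite expr2.
Qed.

Lemma norm2N x : norm2 (- x) = norm2 x.
Proof. by rewrite /norm2; congr Num.sqrt; apply: eq_bigr => i _; rewrite mxE sqrrN. Qed.

Lemma norm2Z (a : R) x : norm2 (a *: x) = `|a| * norm2 x.
Proof.
rewrite /norm2 -sqrtr_sqr -sqrtrM ?sqr_ge0 // mulr_sumr.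
by congr Num.sqrt; apply: eq_bigr => i _; rewrite mxE exprMn.
Qed.

Lemma norm2_eq0 x : norm2 x = 0 -> x = 0.
Proof.
move=> x0; have /eqP : \sum_i x i 0 ^+ 2 = 0.
  by rewrite -(sqr_sqrtr (sumr_ge0 _ (fun i _ => sqr_ge0 (x i 0)))) -/(norm2 x) x0 expr0n.
rewrite psumr_eq0 => [/allP x_eq0 | i _]; last exact: sqr_ge0.
apply/colP => i; have := x_eq0 i (mem_index_enum i).
by rewrite mxE sqrf_eq0 => /eqP.
Qed.

Lemma normr_dot_le x y : `|dot x y| <= norm2 x * norm2 y.
Proof.
rewrite -(ler_pXn2r (_ : (0 < 2)%N)) ?nnegrE ?mulr_ge0 ?norm2_ge0 //.
by rewrite real_normK ?num_real // exprMn -!dotxx !dotE cauchy_schwarz.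
Qed.

Lemma dot_le x y : dot x y <= norm2 x * norm2 y.
Proof. exact: le_trans (ler_norm _) (normr_dot_le x y). Qed.

Lemma qform_dot M x : qform M x = dot x (M *m x).
Proof. by rewrite /qform /dot mulmxA. Qed.

Lemma qformB A B x : qform (A - B) x = qform A x - qform B x.
Proof. by rewrite !qform_dot mulmxBl dotBr. Qed.

Lemma qformD A B x : qform (A + B) x = qform A x + qform B x.
Proof. by rewrite !qform_dot mulmxDl /dot mulmxDr mxE. Qed.

Lemma qform_scalar (a : R) x : qform a%:M x = a * norm2 x ^+ 2.
Proof. by rewrite qform_dot mul_scalar_mx dotZr dotxx. Qed.

Lemma qformZl (a : R) M x : qform (a *: M) x = a * qform M x.
Proof. by rewrite !qform_dot -scalemxAl dotZr. Qed.

Lemma qformZr (a : R) M x : qform M (a *: x) = a ^+ 2 * qform M x.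
Proof. by rewrite !qform_dot -scalemxAr dotZr dotC dotZr dotC mulrA expr2. Qed.

Lemma mul_rank1 u y x : u *m y^T *m x = dot y x *: u.
Proof. by rewrite -mulmxA [y^T *m x]mx11_scalar mul_mx_scalar. Qed.

Lemma qform_rank1 u x : qform (u *m u^T) x = dot x u ^+ 2.
Proof. by rewrite qform_dot mul_rank1 dotZr dotC expr2. Qed.

Lemma qform_sum_rank1 (I : finType) (P : pred I) (c : I -> R) (y : I -> 'cV[R]_p) x :
  qform (\sum_(n | P n) c n *: (y n *m (y n)^T)) x = \sum_(n | P n) c n * dot x (y n) ^+ 2.
Proof.
rewrite qform_dot mulmx_suml; under eq_bigr do rewrite -scalemxAl mul_rank1.
by rewrite dot_sumr; apply: eq_bigr => n _; rewrite dotZr dotC expr2.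
Qed.

Lemma opnorm_has_ubound M :
  has_ubound [set norm2 (M *m x) | x in [set x : 'cV[R]_p | norm2 x <= 1]].
Proof.
exists (Num.sqrt (\sum_i \sum_j M i j ^+ 2)) => _ [x /= x_le1 <-].
rewrite /norm2 ler_sqrt; last by do 2!apply: sumr_ge0 => ? _; exact: sqr_ge0.
apply: ler_sum => i _; rewrite mxE.
apply: le_trans (cauchy_schwarz predT (M i) (x^~ 0)) _.
rewrite ler_piMr //; first by apply: sumr_ge0 => j _; exact: sqr_ge0.
by rewrite -(sqr_sqrtr (sumr_ge0 _ (fun j _ => sqr_ge0 (x j 0)))) -/(norm2 x) expr_le1 ?norm2_ge0.
Qed.

Lemma le_opnorm_unit M x : norm2 x <= 1 -> norm2 (M *m x) <= opnorm M.
Proof. by move=> x_le1; apply: ub_le_sup; [exact: opnorm_has_ubound | exists x]. Qed.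

Lemma norm2_0 : norm2 (0 : 'cV[R]_p) = 0.
Proof. by rewrite -(scale0r (0 : 'cV[R]_p)) norm2Z normr0 mul0r. Qed.

Lemma opnorm_ge0 M : 0 <= opnorm M.
Proof.
apply: le_trans (le_opnorm_unit M (_ : norm2 0 <= 1)).
  by rewrite mulmx0 norm2_0.
by rewrite norm2_0 ler01.
Qed.

Lemma norm2_mulmx_le M x : norm2 (M *m x) <= opnorm M * norm2 x.
Proof.
have [/norm2_eq0 -> | x_neq0] := eqVneq (norm2 x) 0; first by rewrite mulmx0 norm2_0 mulr0.
have x_gt0 : 0 < norm2 x by rewrite lt0r x_neq0 norm2_ge0.
have := le_opnorm_unit M (_ : norm2 ((norm2 x)^-1 *: x) <= 1).
rewrite -scalemxAr !norm2Z ger0_norm ?invr_ge0 ?norm2_ge0 // mulVf // lexx.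
by move=> /(_ isT); rewrite mulrC ler_pdivrMr.
Qed.

Lemma qform_le_opnorm M x : qform M x <= opnorm M * norm2 x ^+ 2.
Proof.
rewrite qform_dot (le_trans (dot_le _ _)) // mulrC expr2 mulrA ler_wpM2r ?norm2_ge0 //.
exact: norm2_mulmx_le.
Qed.

End EuclideanSpace.

Section PsdFrobenius.
Variables (R : realType) (p : nat).
Implicit Types (P rho : 'M[R]_p) (x u : 'cV[R]_p).

Lemma frobBr P rho rho' : frob P (rho - rho') = frob P rho - frob P rho'.
Proof. by rewrite /frob mulmxBr linearB. Qed.

Lemma frobZr P (a : R) rho : frob P (a *: rho) = a * frob P rho.
Proof. by rewrite /frob -scalemxAr mxtraceZ. Qed.

Lemma qform_tr P x : qform P^T x = qform P x.
Proof.
rewrite /qform (_ : (x^T *m P^T *m x) 0 0 = (x^T *m P^T *m x)^T 0 0); last by rewrite [RHS]mxE.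
by rewrite !trmx_mul !trmxK mulmxA.
Qed.

Lemma frob_rank1 P u : frob P (u *m u^T) = qform P u.
Proof.
rewrite /frob mulmxA mxtrace_mulC mulmxA.
by rewrite [u^T *m P^T *m u]mx11_scalar mxtrace_scalar mulr1n -[X in X = _]/(qform _ _) qform_tr.
Qed.

Lemma qform_delta rho k : qform rho (delta_mx k 0) = rho k k.
Proof. by rewrite qform_dot dotC dot_delta -colE mxE. Qed.

Lemma qform_symD rho x y : rho^T = rho ->
  qform rho (x + y) = qform rho x + 2 * dot (rho *m x) y + qform rho y.
Proof.
move=> rho_sym; rewrite !qform_dot mulmxDr dotDl !dotDr (dotC y (rho *m x)).
have -> : dot x (rho *m y) = dot (rho *m x) y by rewrite dot_mulmxl rho_sym.
ring.
Qed.

Lemma psd_diag_ge0 rho k : psd rho -> 0 <= rho k k.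
Proof. by move=> /(_ (delta_mx k 0)); rewrite qform_delta. Qed.

Lemma psd_row_eq0 rho k : rho^T = rho -> psd rho -> rho k k = 0 -> forall j, rho k j = 0.
Proof.
move=> rho_sym rho_psd rho_kk0 j; apply/eqP/negPn/negP => rho_kj_neq0.
set t := - (rho j j + 1) / (2 * rho k j).
have := rho_psd (delta_mx j 0 + t *: delta_mx k 0).
rewrite qform_symD // qformZr !qform_delta rho_kk0 dotZr dot_delta -colE mxE.
have -> : rho j j + 2 * (t * rho k j) + t ^+ 2 * 0 = -1.
  by rewrite /t; field.
by rewrite ler0N1.
Qed.

(* When [rho k k = 0] the junk value [0^-1 = 0] makes this the identity, which is
   harmless since row [k] of a symmetric PSD [rho] then vanishes (psd_row_eq0). *)
Definition schur_step rho k : 'M[R]_p :=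
  rho - (rho k k)^-1 *: (col k rho *m (col k rho)^T).

Lemma schur_stepE rho k i j :
  schur_step rho k i j = rho i j - (rho k k)^-1 * (rho i k * rho j k).
Proof. by rewrite !mxE big_ord1 !mxE. Qed.

Lemma schur_step_sym rho k : rho^T = rho -> (schur_step rho k)^T = schur_step rho k.
Proof. by move=> rho_sym; rewrite /schur_step linearB linearZ /= trmx_mul trmxK rho_sym. Qed.

Lemma schur_step_psd rho k : rho^T = rho -> psd rho -> psd (schur_step rho k).
Proof.
move=> rho_sym rho_psd x; rewrite qformB qformZl qform_rank1.
set c := rho k k; set s := dot x (col k rho).
have [c0 | c_neq0] := eqVneq c 0; first by rewrite c0 invr0 mul0r subr0.
(* [x - (s / c) e_k] minimises the quadratic form of [rho] on the line [x + t e_k] *)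
have := rho_psd (x + (- s / c) *: delta_mx k 0).
rewrite qform_symD // qformZr qform_delta dotZr dot_mulmxl rho_sym -colE -/c -/s.
suff -> : qform rho x + 2 * (- s / c * s) + (- s / c) ^+ 2 * c = qform rho x - c^-1 * s ^+ 2 by [].
by field.
Qed.

Lemma schur_step_pivot_row rho k : rho^T = rho -> psd rho -> forall j, schur_step rho k k j = 0.
Proof.
move=> rho_sym rho_psd j; rewrite schur_stepE.
have rho_symE i l : rho l i = rho i l by rewrite -[in LHS]rho_sym mxE.
have [c0 | c_neq0] := eqVneq (rho k k) 0.
  by rewrite c0 invr0 mul0r subr0; exact: psd_row_eq0.
by rewrite rho_symE mulrA mulVf // mul1r subrr.
Qed.

Lemma schur_step_zero_row rho k i : (forall j, rho i j = 0) ->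
  forall j, schur_step rho k i j = 0.
Proof. by move=> rho_i0 j; rewrite schur_stepE !rho_i0 mul0r mulr0 subrr. Qed.

Lemma frob_schur_step P rho k :
  frob P rho = frob P (schur_step rho k) + (rho k k)^-1 * qform P (col k rho).
Proof. by rewrite frobBr frobZr frob_rank1 subrK. Qed.

Lemma frob_psd_ge0 P rho : psd P -> rho^T = rho -> psd rho -> 0 <= frob P rho.
Proof.
move=> P_psd.
(* eliminate the rows of [rho] one pivot at a time, from the last one down *)
suff frob_ge0 n rho' : (n <= p)%N -> rho'^T = rho' -> psd rho' ->
    (forall i j : 'I_p, (n <= i)%N -> rho' i j = 0) -> 0 <= frob P rho'.
  by move=> rho_sym rho_psd; apply: (frob_ge0 p) => // i j; rewrite leqNgt ltn_ord.
elim: n rho' => [|n IHn] rho' n_lt_p rho_sym rho_psd rows0.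
  have -> : rho' = 0 by apply/matrixP => i j; rewrite mxE rows0.
  by rewrite /frob mulmx0 mxtrace0.
pose k := Ordinal n_lt_p.
rewrite (frob_schur_step _ _ k) addr_ge0 //.
  apply: IHn; [exact: ltnW | exact: schur_step_sym | exact: schur_step_psd | move=> i j].
  rewrite leq_eqVlt => /orP[/eqP n_i | n_lt_i].
    have -> : i = k by exact/val_inj.
    exact: schur_step_pivot_row.
  by apply: schur_step_zero_row => l; exact: rows0.
by rewrite mulr_ge0 // invr_ge0 psd_diag_ge0.
Qed.

End PsdFrobenius.

Section CappedWeights.
Variables (R : realType) (N : nat) (eps : R) (I : {set 'I_N}).
Implicit Types w : 'I_N -> R.

Let nN : R := N%:R.
Let nI : R := #|I|%:R.
Let nO : R := #|~: I|%:R.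

Definition uniform_on : 'I_N -> R := fun n => if n \in I then nI^-1 else 0.

Lemma card_inliers : nI + nO = nN.
Proof. by rewrite /nI /nO /nN -natrD cardsC card_ord. Qed.

Lemma sum_uniform_on : (0 < #|I|)%N -> \sum_(n in I) uniform_on n = 1.
Proof.
move=> I_gt0; rewrite (eq_bigr (fun=> nI^-1)) => [|n n_in]; last by rewrite /uniform_on n_in.
by rewrite sumr_const -mulr_natr mulVf // pnatr_eq0 -lt0n.
Qed.

Lemma uniform_on_capped eps' : (0 < #|I|)%N -> 0 <= eps' < 1 ->
  capped_simplex I eps' uniform_on.
Proof.
move=> I_gt0 /andP[eps'_ge0 eps'_lt1]; split=> [|n n_in]; first exact: sum_uniform_on.
have nI_gt0 : 0 < nI by rewrite ltr0n.
rewrite /uniform_on n_in invr_ge0 ltW // div1r lef_pV2 ?posrE ?mulr_gt0 ?subr_gt0 //.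
by rewrite ger_pMl // lerBlDr lerDl.
Qed.

Lemma uniform_on_out n : n \notin I -> uniform_on n = 0.
Proof. by rewrite /uniform_on => /negbTE ->. Qed.

Lemma wsum_uniform_on (F : 'I_N -> R) :
  \sum_n uniform_on n * F n = \sum_(n in I) uniform_on n * F n.
Proof.
rewrite (sum_setC_split I) [X in _ + X]big1 ?addr0 // => n.
by rewrite inE => /uniform_on_out ->; rewrite mul0r.
Qed.

Hypotheses (N_gt0 : (0 < N)%N) (eps_ge0 : 0 <= eps) (eps_lt_half : eps < 1 / 2)
  (outliers_le : nO <= eps * nN).

Lemma nN_gt0 : 0 < nN.
Proof. by rewrite ltr0n. Qed.

Lemma card_inliers_ge : (1 - eps) * nN <= nI.
Proof. by move: card_inliers outliers_le; lra. Qed.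

Lemma card_inliers_gt0 : (0 < #|I|)%N.
Proof. by rewrite -(ltr0n R); move: card_inliers_ge nN_gt0 eps_lt_half; nra. Qed.

Lemma uniform_on_DeltaN : DeltaN eps uniform_on.
Proof.
have eps_lt1 : eps < 1 by move: eps_lt_half; lra.
split=> [|n _].
  transitivity (\sum_n uniform_on n * 1); first by apply: eq_big => [n|n _]; rewrite ?inE ?mulr1.
  rewrite wsum_uniform_on; under eq_bigr do rewrite mulr1.
  exact/sum_uniform_on/card_inliers_gt0.
have den_gt0 : 0 < (1 - eps) * nN by rewrite mulr_gt0 ?subr_gt0 ?nN_gt0.
rewrite cardsT card_ord -/nN div1r /uniform_on; case: ifP => _; last by rewrite lexx invr_ge0 ltW.
have nI_gt0 : 0 < nI by rewrite ltr0n card_inliers_gt0.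
by rewrite invr_ge0 ltW // lef_pV2 ?posrE // card_inliers_ge.
Qed.

Lemma DeltaN_sum1 w : DeltaN eps w -> \sum_n w n = 1.
Proof. by case=> <- _; apply: eq_bigl => n; rewrite inE. Qed.

Lemma DeltaN_bounds w n : DeltaN eps w -> 0 <= w n /\ w n * ((1 - eps) * nN) <= 1.
Proof.
case=> _ /(_ n); rewrite inE cardsT card_ord => /(_ isT) [w_ge0 w_le]; split => //.
by rewrite -ler_pdivlMr // mulr_gt0 ?nN_gt0 // subr_gt0; move: eps_lt_half; lra.
Qed.

Lemma outlier_mass_le w : DeltaN eps w ->
  (\sum_(n in ~: I) w n) * ((1 - eps) * nN) <= nO.
Proof.
move=> w_D; rewrite mulr_suml /nO -sumr_const.
by apply: ler_sum => n _; exact: (proj2 (DeltaN_bounds n w_D)).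
Qed.

Lemma outlier_mass_scaled_le w : DeltaN eps w -> (1 - eps) * \sum_(n in ~: I) w n <= eps.
Proof.
move=> /outlier_mass_le Wo_le; rewrite -(ler_pM2r nN_gt0).
by move: Wo_le outliers_le; lra.
Qed.

Lemma outlier_le_inlier_mass w : DeltaN eps w ->
  (1 - 2 * eps) * \sum_(n in ~: I) w n <= eps * \sum_(n in I) w n.
Proof.
move=> w_D; have := DeltaN_sum1 w_D; rewrite (sum_setC_split I).
by move: (outlier_mass_scaled_le w_D); nra.
Qed.

Lemma inlier_mass_gt0 w : DeltaN eps w -> 0 < \sum_(n in I) w n.
Proof.
move=> w_D; have := DeltaN_sum1 w_D; rewrite (sum_setC_split I).
by move: (outlier_mass_scaled_le w_D) eps_ge0 eps_lt_half; nra.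
Qed.

Lemma inlier_restriction_capped w : DeltaN eps w ->
  capped_simplex I (eps / (1 - eps)) (fun n => w n / \sum_(m in I) w m).
Proof.
move=> w_D; have Wi_gt0 := inlier_mass_gt0 w_D.
set Wi := \sum_(m in I) w m; set Wo := \sum_(m in ~: I) w m.
split=> [|n n_in]; first by rewrite -mulr_suml divff ?gt_eqF.
have [w_ge0 w_le] := DeltaN_bounds n w_D.
rewrite divr_ge0 ?(ltW Wi_gt0) //; split => //.
have eps_lt1 : eps < 1 by move: eps_lt_half; lra.
set d := (1 - eps) * nN; set r := (1 - 2 * eps) / (1 - eps).
have -> : 1 - eps / (1 - eps) = r by rewrite /r; field; rewrite subr_eq0 gt_eqF.
have r_gt0 : 0 < r by rewrite divr_gt0 // subr_gt0; move: eps_lt_half; lra.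
have wn_le : w n * (d - nO) <= Wi.
  have Wo_le := outlier_mass_le w_D; have WiWo := DeltaN_sum1 w_D.
  rewrite -/d -/Wo in w_le Wo_le.
  rewrite (sum_setC_split I) -/Wi -/Wo in WiWo.
  have d_gt0 : 0 < d by rewrite mulr_gt0 ?nN_gt0 // subr_gt0.
  have gap : 0 <= d - nO by move: outliers_le eps_lt_half nN_gt0; rewrite /d; nra.
  have -> : Wi = 1 - Wo by move: WiWo; lra.
  have : 0 <= (1 - w n * d) * (d - nO) by rewrite mulr_ge0 // subr_ge0.
  by rewrite -(ler_pM2r d_gt0); move: Wo_le; nra.
have gap : r * nI <= d - nO.
  rewrite -(ler_pM2r (_ : 0 < 1 - eps)) ?subr_gt0 // mulrAC /r mulfVK ?subr_eq0 ?gt_eqF //.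
  have : 0 <= eps * (eps * nN - nO) by rewrite mulr_ge0 // subr_ge0.
  by move: card_inliers; rewrite /d; nra.
have rnI_gt0 : 0 < r * nI by rewrite mulr_gt0 ?ltr0n ?card_inliers_gt0.
rewrite ler_pdivrMr // div1r mulrC ler_pdivlMr //.
by apply: le_trans wn_le; rewrite ler_wpM2l.
Qed.

End CappedWeights.
Arguments uniform_on {R N} I _.

Section DensitySup.
Variables (R : realType) (p : nat).
Implicit Types (S rho : 'M[R]_p) (u x : 'cV[R]_p).

Lemma density_rank1 u : dot u u = 1 -> density (u *m u^T).
Proof.
move=> uu1; split; first by rewrite trmx_mul trmxK.
split; first by move=> x; rewrite qform_rank1 sqr_ge0.
by rewrite mxtrace_mulC [u^T *m u]mx11_scalar mxtrace_scalar.
Qed.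

Lemma density_frob_le S rho (c : R) : density rho -> psd (c%:M - S) -> frob S rho <= c.
Proof.
move=> [rho_sym [rho_psd rho_tr1]] /frob_psd_ge0 /(_ rho_sym rho_psd).
rewrite /frob linearB /= tr_scalar_mx mulmxBl mul_scalar_mx linearB /= mxtraceZ rho_tr1.
by rewrite mulr1 subr_ge0.
Qed.

Lemma density_delta (k : 'I_p) :
  density (delta_mx k 0 *m (delta_mx k 0 : 'cV[R]_p)^T).
Proof. by apply: density_rank1; rewrite dot_delta mxE !eqxx. Qed.

Let frobs S := [set frob S rho | rho in [set rho | density rho]].

Lemma sup_frob_density_le S (c : R) : (0 < p)%N ->
  (forall x, qform S x <= c * norm2 x ^+ 2) -> sup (frobs S) <= c.
Proof.
move=> p_gt0 S_le; apply: ge_sup => [|_ [rho rho_dens <-]].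
  pose e := delta_mx (Ordinal p_gt0) 0 : 'cV[R]_p.
  by exists (frob S (e *m e^T)), (e *m e^T) => //; exact: density_delta.
by apply: density_frob_le => // x; rewrite qformB qform_scalar subr_ge0.
Qed.

Lemma sup_frob_density_ge0 S : (0 < p)%N -> psd S -> 0 <= sup (frobs S).
Proof.
move=> p_gt0 S_psd; pose e := delta_mx (Ordinal p_gt0) 0 : 'cV[R]_p.
apply: le_trans (S_psd e) _; rewrite -frob_rank1; apply: ub_le_sup; last first.
  by exists (e *m e^T) => //; exact: density_delta.
exists (opnorm S) => _ [rho rho_dens <-].
by apply: density_frob_le => // x; rewrite qformB qform_scalar subr_ge0 qform_le_opnorm.
Qed.

End DensitySup.

Section InlierStability.
Variables (R : realType) (N p : nat) (eps : R) (g : 'I_N -> 'cV[R]_p) (I : {set 'I_N})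
  (mug : 'cV[R]_p) (Sigmag : 'M[R]_p) (dmu dSigma : R).
Hypotheses (N_gt0 : (0 < N)%N) (eps_ge0 : 0 <= eps) (eps_lt_half : eps < 1 / 2)
  (stable : inlier_stable eps g I mug Sigmag dmu dSigma).
Implicit Types (w : 'I_N -> R) (mu x v : 'cV[R]_p).

Let outliers_le : #|~: I|%:R <= eps * N%:R := proj1 stable.
Let dmu_ge0 : 0 <= dmu := proj1 (proj2 (proj2 (proj2 stable))).
Let dSigma_ge0 : 0 <= dSigma := proj1 (proj2 (proj2 (proj2 (proj2 stable)))).
Let stable_weights := proj2 (proj2 (proj2 (proj2 (proj2 stable)))).

Lemma stable_mean w : capped_simplex I (eps / (1 - eps)) w ->
  norm2 (\sum_(n in I) w n *: (g n - mug)) <= dmu.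
Proof. by move=> /stable_weights []. Qed.

Lemma stable_cov w x : capped_simplex I (eps / (1 - eps)) w ->
  \sum_(n in I) w n * dot x (g n - mug) ^+ 2 <= (opnorm Sigmag + dSigma) * norm2 x ^+ 2.
Proof.
move=> /stable_weights [_ /(_ x)].
rewrite qformB qformD qform_scalar qform_sum_rank1 subr_ge0 mulrDl => cov_le.
by apply: le_trans cov_le _; rewrite lerD2r qform_le_opnorm.
Qed.

Lemma qform_Smat_uniform_le mu x :
  qform (Smat g (uniform_on I) mu) x <=
  (opnorm Sigmag + dSigma + 2 * dmu * norm2 (mu - mug) + norm2 (mu - mug) ^+ 2) * norm2 x ^+ 2.
Proof.
have u_capped : capped_simplex I (eps / (1 - eps)) (uniform_on I).
  have eps_lt1 : eps < 1 by move: eps_lt_half; lra.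
  apply: uniform_on_capped; first exact: (card_inliers_gt0 N_gt0 eps_lt_half outliers_le).
  rewrite divr_ge0 ?subr_ge0 ?(ltW eps_lt1) //=.
  by rewrite ltr_pdivrMr ?subr_gt0 // mul1r; move: eps_lt_half; lra.
rewrite /Smat qform_sum_rank1 wsum_uniform_on.
set e := norm2 (mu - mug); set b := dot x (mug - mu).
have shift n : dot x (g n - mu) = dot x (g n - mug) + b by rewrite /b -dotDr addrA subrK.
under eq_bigr do rewrite shift.
rewrite wsum_sqrD (proj1 u_capped) mulr1 -dot_sumr.
set m := dot x _; have cov := stable_cov x u_capped.
have m_le : `|m| <= norm2 x * dmu.
  by apply: le_trans (normr_dot_le _ _) _; rewrite ler_wpM2l ?norm2_ge0 ?stable_mean.
have b_le : `|b| <= norm2 x * e.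
  by apply: le_trans (normr_dot_le _ _) _; rewrite -[norm2 (mug - mu)]norm2N opprB.
have bm_le : b * m <= norm2 x * e * (norm2 x * dmu).
  by apply: le_trans (ler_norm _) _; rewrite normrM ler_pM ?normr_ge0.
have b2_le : b ^+ 2 <= (norm2 x * e) ^+ 2.
  by rewrite -real_normK ?num_real // ler_pXn2r ?nnegrE ?normr_ge0 ?mulr_ge0 ?norm2_ge0.
by move: cov bm_le b2_le; lra.
Qed.

Lemma OPT_le mu : (0 < p)%N ->
  OPT eps g mu <=
  opnorm Sigmag + dSigma + 2 * dmu * norm2 (mu - mug) + norm2 (mu - mug) ^+ 2.
Proof.
move=> p_gt0; apply: le_trans (sup_frob_density_le p_gt0 (qform_Smat_uniform_le mu)).
apply: ge_inf; last by exists (uniform_on I) => //; exact: uniform_on_DeltaN.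
exists 0 => _ [w w_D <-]; apply: sup_frob_density_ge0 => // x.
rewrite /Smat qform_sum_rank1; apply: sumr_ge0 => n _.
by rewrite mulr_ge0 ?sqr_ge0 // (proj1 (DeltaN_bounds N_gt0 eps_lt_half n w_D)).
Qed.

Lemma wsum_dot_sqr_le_gamma mu w v : norm2 v = 1 ->
  \sum_n w n * dot v (g n - mu) ^+ 2 <= gammaS g w mu.
Proof.
move=> v1; have := qform_le_opnorm (Smat g w mu) v.
by rewrite v1 expr1n mulr1 /Smat qform_sum_rank1.
Qed.

Lemma inlier_wmean_dot_le w v : DeltaN eps w -> norm2 v = 1 ->
  \sum_(n in I) w n * dot v (g n - mug) <= (\sum_(n in I) w n) * dmu.
Proof.
move=> w_D v1; have Wi_gt0 := inlier_mass_gt0 N_gt0 eps_ge0 eps_lt_half outliers_le w_D.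
have mean_le := stable_mean (inlier_restriction_capped N_gt0 eps_ge0 eps_lt_half outliers_le w_D).
have := dot_le v (\sum_(n in I) (w n / \sum_(m in I) w m) *: (g n - mug)).
rewrite v1 mul1r => /le_trans /(_ mean_le).
rewrite dot_sumr => normalized_le; rewrite -ler_pdivrMl // mulr_sumr.
by under eq_bigr do rewrite mulrA [_^-1 * _]mulrC.
Qed.

Lemma outlier_mass_le_alpha w : DeltaN eps w ->
  \sum_(n in ~: I) w n <= alpha_eps eps ^+ 2 * \sum_(n in I) w n.
Proof.
move=> w_D; have mass_le := outlier_le_inlier_mass N_gt0 eps_lt_half outliers_le w_D.
have den_gt0 : 0 < 1 - 2 * eps by move: eps_lt_half; lra.
rewrite /alpha_eps sqr_sqrtr ?divr_ge0 ?(ltW den_gt0) // mulrAC ler_pdivlMr //.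
by rewrite mulrC.
Qed.

Lemma mean_deviation_le mu w : DeltaN eps w ->
  norm2 (\sum_n w n *: g n - mug) <= dmu + alpha_eps eps * Num.sqrt (gammaS g w mu).
Proof.
move=> w_D; set a := alpha_eps eps; set gam := gammaS g w mu.
have w_ge0 n : 0 <= w n := proj1 (DeltaN_bounds N_gt0 eps_lt_half n w_D).
have w1 := DeltaN_sum1 w_D.
have -> : \sum_n w n *: g n - mug = \sum_n w n *: (g n - mug).
  rewrite -[mug in LHS]scale1r -w1 scaler_suml -sumrB.
  by apply: eq_bigr => n _; rewrite scalerBr.
set d := \sum_n _; set D := norm2 d.
have [D_le | dmu_lt_D] := lerP D dmu.
  by apply: le_trans D_le _; rewrite lerDl mulr_ge0 ?sqrtr_ge0.
have D_gt0 : 0 < D by apply: le_lt_trans dmu_lt_D.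
pose v := D^-1 *: d.
have v1 : norm2 v = 1 by rewrite norm2Z ger0_norm ?invr_ge0 ?norm2_ge0 // mulVf ?gt_eqF.
have tD : \sum_n w n * dot v (g n - mug) = D.
  by rewrite -dot_sumr dotZl dotxx -/D expr2 mulKf ?gt_eqF.
have := wmean_shift_sqr_le w_ge0 w1 tD (inlier_wmean_dot_le w_D v1) (ltW dmu_lt_D).
have recentre n : dot v (g n - mug) - dot v (mu - mug) = dot v (g n - mu).
  by rewrite -dotBr opprB addrA subrK.
have := wvariance_le (fun n => dot v (g n - mug)) (dot v (mu - mug)) w1.
rewrite tD; under [X in _ <= X -> _]eq_bigr do rewrite recentre.
move=> /le_trans /(_ (wsum_dot_sqr_le_gamma mu w v1)) V_le shift_le.
have Wi_gt0 := inlier_mass_gt0 N_gt0 eps_ge0 eps_lt_half outliers_le w_D.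
have Wo_ge0 : 0 <= \sum_(n in ~: I) w n by apply: sumr_ge0.
have gam_ge0 : 0 <= gam := opnorm_ge0 _.
have dev_le : (D - dmu) ^+ 2 <= (a * Num.sqrt gam) ^+ 2.
  rewrite exprMn [Num.sqrt gam ^+ 2]sqr_sqrtr // -(ler_pM2l Wi_gt0).
  apply: le_trans shift_le _.
  have := ler_wpM2l Wo_ge0 V_le; have := ler_wpM2r gam_ge0 (outlier_mass_le_alpha w_D).
  by rewrite -/a -/gam; lra.
rewrite -lerBlDl -(ler_pXn2r (_ : 0 < 2)%N) // nnegrE ?subr_ge0 ?(ltW dmu_lt_D) //.
by rewrite mulr_ge0 ?sqrtr_ge0.
Qed.

Lemma mean_estimate_step mu w (delta : R) : (0 < p)%N -> 0 <= delta -> DeltaN eps w ->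
  gammaS g w mu <= OPT eps g mu + delta ->
  norm2 (\sum_n w n *: g n - mug) <=
  alpha_eps eps * norm2 (mu - mug) +
  ((1 + alpha_eps eps) * dmu + alpha_eps eps * Num.sqrt (opnorm Sigmag + dSigma + delta)).
Proof.
move=> p_gt0 delta_ge0 w_D gam_le.
set a := alpha_eps eps; set e := norm2 (mu - mug).
set s := Num.sqrt (opnorm Sigmag + dSigma + delta).
have A_ge0 : 0 <= opnorm Sigmag + dSigma + delta by rewrite !addr_ge0 ?opnorm_ge0.
have e_ge0 : 0 <= e := norm2_ge0 _.
have s_ge0 : 0 <= s := sqrtr_ge0 _.
have sqrt_gam_le : Num.sqrt (gammaS g w mu) <= s + e + dmu.
  rewrite -(ler_pXn2r (_ : 0 < 2)%N) ?nnegrE ?sqrtr_ge0 ?addr_ge0 //.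
  rewrite sqr_sqrtr ?opnorm_ge0 //; apply: le_trans gam_le _.
  have := OPT_le mu p_gt0; have s2 : s ^+ 2 = opnorm Sigmag + dSigma + delta by rewrite sqr_sqrtr.
  by rewrite -/e; move: s2 e_ge0 s_ge0 dmu_ge0; nra.
apply: le_trans (mean_deviation_le mu w_D) _; rewrite -/a.
have a_ge0 : 0 <= a := sqrtr_ge0 _.
by move: (ler_wpM2l a_ge0 sqrt_gam_le); lra.
Qed.

End InlierStability.

Section LimnSupAffineRecursion.
Variable R : realType.
Implicit Types (u v : R^o^nat) (a r : R) (l : R^o).

Lemma limn_sup_le_cvg u v l : bounded_fun u -> v @ \oo --> l ->
  (\forall n \near \oo, u n <= v n) -> limn_sup u <= l.
Proof.
move=> u_bnd v_l [N _ uv]; have v_cvg : cvgn v by apply/cvg_ex; exists l.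
rewrite -(cvg_limn_inf_sup v_l).2; apply: ler_lim.
- apply: nonincreasing_is_cvgn; last exact: bounded_fun_has_lbound_sups.
  exact/nonincreasing_sups/bounded_fun_has_ubound.
- exact: is_cvg_sups.
near=> n; apply: ge_sup => [|_ [k /= n_le_k <-]]; first by exists (u n), n => /=.
have N_le_k : (N <= k)%N by apply: leq_trans n_le_k; near: n; exists N.
apply: le_trans (uv _ N_le_k) _; apply: ub_le_sup; last by exists k.
exact/has_ubound_sdrop/bounded_fun_has_ubound/cvg_seq_bounded.
Unshelve. all: by end_near.
Qed.

Section AffineRecursion.
Variables (a r : R) (u : nat -> R).
Hypotheses (a_ge0 : 0 <= a) (a_lt1 : a < 1)
  (u_step : forall s, (1 <= s)%N -> u s.+1 <= a * u s + r).

Lemma affine_recursion_le s : (1 <= s)%N ->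
  u s <= a ^+ s.-1 * u 1%N + (1 - a ^+ s.-1) / (1 - a) * r.
Proof.
case: s => // s _; elim: s => [|s IHs] /=; first by rewrite expr0 mul1r subrr !mul0r addr0.
apply: le_trans (u_step (ltn0Sn s)) _.
have -> : a ^+ s.+1 * u 1%N + (1 - a ^+ s.+1) / (1 - a) * r =
    a * (a ^+ s * u 1%N + (1 - a ^+ s) / (1 - a) * r) + r.
  by rewrite exprS; field; rewrite subr_eq0 gt_eqF.
by rewrite lerD2r; apply: ler_wpM2l.
Qed.

Lemma limn_sup_affine_recursion : (forall s, 0 <= u s) -> 0 <= r ->
  limn_sup u <= r / (1 - a).
Proof.
move=> u_ge0 r_ge0; have a1_gt0 : 0 < 1 - a by rewrite subr_gt0.
have pow_le1 k : a ^+ k <= 1 by rewrite exprn_ile1 // ltW.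
have u_le s : (1 <= s)%N -> u s <= u 1%N + r / (1 - a).
  move=> s_ge1; apply: le_trans (affine_recursion_le s_ge1) _; apply: lerD.
    by rewrite ler_piMl.
  by rewrite mulrAC ler_pM2r ?invr_gt0 // ler_piMl // lerBlDr lerDl exprn_ge0.
have u_le_C s : u s <= u 0%N + u 1%N + r / (1 - a).
  have C_ge0 : 0 <= r / (1 - a) by rewrite divr_ge0 // ltW.
  case: s => [|s]; first by rewrite -addrA lerDl addr_ge0.
  by apply: le_trans (u_le _ (ltn0Sn s)) _; rewrite -addrA lerDr.
have u_bnd : bounded_fun u.
  rewrite /bounded_near; near=> M => s _ /=; rewrite ger0_norm //.
  by apply: le_trans (u_le_C s) _; near: M; apply: nbhs_pinfty_ge; exact: num_real.
apply: (limn_sup_le_cvg u_bnd (v := fun s => a ^+ s.-1 * u 1%N + (1 - a ^+ s.-1) / (1 - a) * r)).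
  rewrite -cvg_shiftS /=.
  have a_pow0 : a ^+ n @[n --> \oo] --> (0 : R^o) by apply: cvg_expr; rewrite ger0_norm.
  have -> : r / (1 - a) = 0 * u 1%N + (1 - 0) / (1 - a) * r.
    by rewrite mul0r add0r subr0 div1r mulrC.
  apply: cvgD; first exact: cvgMr_tmp.
  by apply: cvgMr_tmp; apply: cvgMr_tmp; apply: cvgB => //; exact: cvg_cst.
near=> s; apply: affine_recursion_le; near: s; exists 1%N => //.
Unshelve. all: by end_near.
Qed.

End AffineRecursion.
End LimnSupAffineRecursion.

Lemma alpha_eps_lt1 (R : realType) (eps : R) : 0 <= eps -> eps < 1 / 3 -> alpha_eps eps < 1.
Proof.
move=> eps_ge0 eps_lt; have den_gt0 : 0 < 1 - 2 * eps by move: eps_lt; lra.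
rewrite /alpha_eps -[ltRHS]sqrtr1 ltr_sqrt ?ltr01 // ltr_pdivrMr // mul1r.
by move: eps_lt; lra.
Qed.

Lemma deltaT_ge0 (R : realType) (eps nu : R) (p T : nat) : 0 <= nu -> 0 <= deltaT eps nu p T.
Proof. by move=> nu_ge0; rewrite /deltaT !mulr_ge0 ?addr_ge0 ?sqrtr_ge0. Qed.

Theorem mainTheorem11 (R : realType) (N p : nat) (eps : R) (g : 'I_N -> 'cV[R]_p)
  (T : nat) (Iin : {set 'I_N}) (mug : 'cV[R]_p) (Sigmag : 'M[R]_p) (dmu dSigma : R)
  (muhat : nat -> 'cV[R]_p) (wbar : nat -> 'I_N -> R) :
  (1 <= N)%N -> (2 <= p)%N -> 0 < eps -> eps < 1 / 3 ->
  0 < nuG g ->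
  4 * Num.max (ln (1 / (1 - eps))) (ln p%:R) <= T%:R ->
  inlier_stable eps g Iin mug Sigmag dmu dSigma ->
  in_conv g (muhat 1%N) ->
  (forall s, (1 <= s)%N -> DeltaN eps (wbar s)) ->
  (forall s, (1 <= s)%N ->
     gammaS g (wbar s) (muhat s) <= OPT eps g (muhat s) + deltaT eps (nuG g) p T) ->
  (forall s, (1 <= s)%N -> muhat s.+1 = \sum_n wbar s n *: g n) ->
  let e := fun s => norm2 (muhat s - mug) in
  let a := alpha_eps eps in
  let Rt := (1 + a) * dmu
            + a * Num.sqrt (opnorm Sigmag + dSigma + deltaT eps (nuG g) p T) in
  (forall s, (1 <= s)%N -> e s.+1 <= a * e s + Rt) /\
  (forall s, (1 <= s)%N ->
     e s <= a ^+ s.-1 * e 1%N + (1 - a ^+ s.-1) / (1 - a) * Rt) /\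
  limn_sup e <= Rt / (1 - a).
Proof.
(* The conditions on [T] and on [muhat 1] only serve the MW-MMW guarantee, which is
   assumed here through [w_opt]. *)
move=> N_gt0 p_ge2 eps_gt0 eps_lt nu_gt0 _ stable _ w_D w_opt mu_next e a Rt.
have eps_lt_half : eps < 1 / 2 by move: eps_lt; lra.
have dT_ge0 := deltaT_ge0 eps p T (ltW nu_gt0).
have step s : (1 <= s)%N -> e s.+1 <= a * e s + Rt.
  move=> s_ge1; rewrite /e mu_next //.
  have p_gt0 : (0 < p)%N by apply: leq_trans p_ge2.
  exact: (mean_estimate_step N_gt0 (ltW eps_gt0) eps_lt_half stable p_gt0 dT_ge0
    (w_D s s_ge1) (w_opt s s_ge1)).
have a_ge0 : 0 <= a := sqrtr_ge0 _; have a_lt1 := alpha_eps_lt1 (ltW eps_gt0) eps_lt.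
split; [exact: step | split; first exact: affine_recursion_le].
apply: limn_sup_affine_recursion => // [s|]; first exact: norm2_ge0.
have [_ [_ [dmu_ge0 [dSigma_ge0 _]]]] := proj2 stable.
by rewrite /Rt addr_ge0 ?mulr_ge0 ?sqrtr_ge0 ?addr_ge0 ?ler01.
Qed.
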